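(* Let $T\subseteq V$ be any set and $\tilde C\subseteq C$ a nonempty set of colors, and define $\tilde f_c(A)=f_c(A\cup T)$ for $A\subseteq V$, $c\in\tilde C$. For integers $b\ge 0$ let $\widetilde{\mathrm{OPT}}_b=\max_{S\subseteq V,\,|S|\le b}\min_{c\in\tilde C}\tilde f_c(S)$. Let $\gamma>0$ be such that $\tilde f_c(v\mid\emptyset)\le\gamma\,\widetilde{\mathrm{OPT}}_B$ for all $v\in V$ and $c\in\tilde C$. Then for every positive integer $\tilde B\le B$, \[ \widetilde{\mathrm{OPT}}_{\tilde B}\;\ge\;\left(1-\sqrt{3\gamma\frac{B}{\tilde B}\log k}\right)\frac{\tilde B}{B}\,\widetilde{\mathrm{OPT}}_B . \]
   Context: Setup: $V$ is a finite nonempty ground set, $C$ is a finite nonempty set of ''colors'', $k=|C|$. For each $c\in C$, $f_c\colon 2^V\to\mathbb{R}_{\ge 0}$ is monotone and submodular. $B$ is a positive integer (the budget). $f(T\mid S)=f(S\cup T)-f(S)$ and $f(v\mid S)=f(\{v\}\mid S)$. $\log$ is the natural logarithm. *)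

From HB Require Import structures.
From mathcomp Require Import all_boot all_order all_algebra.
From mathcomp Require Export all_boot all_order all_algebra.
From mathcomp Require Import reals exp.
From mathcomp Require Export reals exp.
Set Implicit Arguments. Unset Strict Implicit. Unset Printing Implicit Defensive.
Import Order.TTheory GRing.Theory Num.Theory.
Local Open Scope ring_scope.

Definition monotone_set_fun (R : realType) (V : finType) (g : {set V} -> R) :=
  forall A B : {set V}, A \subset B -> g A <= g B.

Definition submodular_set_fun (R : realType) (V : finType) (g : {set V} -> R) :=
  forall A B : {set V}, g (A :|: B) + g (A :&: B) <= g A + g B.

(* min_{c in Ct} h c, for a nonempty set Ct (value 0 if Ct is empty, never used). *)
Definition min_over (R : realType) (C : finType) (Ct : {set C}) (h : C -> R) : R :=
  match [pick c in Ct] with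
  | Some c0 => \big[Num.min/h c0]_(c in Ct) h c
  | None => 0
  end.

Definition max_card_le (R : realType) (V : finType) (b : nat) (g : {set V} -> R) : R :=
  \big[Num.max/g set0]_(S : {set V} | (#|S| <= b)%N) g S.

Definition ftilde (R : realType) (V C : finType) (f : C -> {set V} -> R)
  (T : {set V}) (c : C) (A : {set V}) : R := f c (A :|: T).

Definition OPTt (R : realType) (V C : finType) (f : C -> {set V} -> R)
  (T : {set V}) (Ct : {set C}) (b : nat) : R :=
  max_card_le b (fun S => min_over Ct (fun c => ftilde f T c S)).

From HB Require Import structures.
From mathcomp Require Import all_boot all_order all_algebra.
From mathcomp Require Import boolp reals sequences exp.
From mathcomp Require Import ring lra.
Import Order.TTheory GRing.Theory Num.Theory.
Set Implicit Arguments. Unset Strict Implicit. Unset Printing Implicit Defensive.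
Local Open Scope ring_scope.

(* Let [S0] attain the optimum for budget [B].  Adding the elements of [S0] one at a time, the
   marginal gains give every color a modular minorant of [f~_c] on the subsets of [S0], with total
   [f~_c(S0) - f~_c(set0)] and, by the small-element hypothesis, entries at most [gamma OPT~_B].
   A uniform [B~]-subset of [S0] keeps in expectation a fraction [B~/|S0| >= B~/B] of every color's
   weight; a Chernoff bound for sampling without replacement, union-bounded over the [k] colors,
   loses at most a [sqrt (3 gamma (B/B~) log k)] fraction of [OPT~_B].  The random choice is
   derandomized by conditional expectations with an exponential pessimistic estimator, and each
   color's weight is capped so that all colors share the same exponent. *)

Section RealFacts.
Variable R : realType.

(* Multiply by [(1 + y/3)^3 <= e^y]: the product exceeds 1 by [y^3] times a positive polynomial. *)
Lemma expRN_le_quadratic (y : R) : 0 <= y -> expR (- y) <= 1 - y + 2 / 3 * y ^+ 2.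
Proof.
move=> y0.
have cube_le : (1 + y / 3) ^+ 3 <= expR y.
  have -> : expR y = expR (y / 3) ^+ 3 by rewrite -expRM_natl; congr expR; field.
  apply: lerXn2r; rewrite ?nnegrE ?expR_ge0 //; first lra.
  have := expR_ge1Dx (y / 3); lra.
have cube_gt0 : 0 < (1 + y / 3) ^+ 3 by apply: exprn_gt0; lra.
have prod_ge1 : 1 <= (1 + y / 3) ^+ 3 * (1 - y + 2 / 3 * y ^+ 2).
  have -> : (1 + y / 3) ^+ 3 * (1 - y + 2 / 3 * y ^+ 2) =
      1 + y ^+ 3 * (10 / 27 + 5 / 27 * y + 2 / 81 * y ^+ 2).
    by rewrite !exprS expr0; field.
  rewrite lerDl; apply: mulr_ge0; first exact: exprn_ge0.
  have := sqr_ge0 y; lra.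
apply: (@le_trans _ _ ((1 + y / 3) ^+ 3)^-1).
  by rewrite expRN lef_pV2 ?posrE ?expR_gt0.
by rewrite -[_^-1]mulr1 ler_pdivrMl.
Qed.

Lemma sum_expRN_le (I : finType) (U : {set I}) (w : I -> R) (x : R) :
  U != set0 -> 0 <= x -> (forall i, 0 <= w i <= 1) ->
  \sum_(i in U) expR (- (x * w i)) <=
    #|U|%:R * expR ((- x + 2 / 3 * x ^+ 2) * (\sum_(i in U) w i) / #|U|%:R).
Proof.
move=> U0 x0 w01.
have U_gt0 : 0 < #|U|%:R :> R by rewrite ltr0n card_gt0.
apply: (@le_trans _ _ (\sum_(i in U) (1 + (- x + 2 / 3 * x ^+ 2) * w i))).
  apply: ler_sum => i _; have /andP [w0 w1] := w01 i.
  apply: le_trans (expRN_le_quadratic (mulr_ge0 x0 w0)) _.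
  have : (x * w i) ^+ 2 <= x ^+ 2 * w i.
    by rewrite exprMn ler_wpM2l ?exprn_ge0 // expr2 ler_piMl.
  lra.
rewrite big_split /= sumr_const -mulr_sumr.
have -> : 1 *+ #|U| + (- x + 2 / 3 * x ^+ 2) * \sum_(i in U) w i =
    #|U|%:R * (1 + (- x + 2 / 3 * x ^+ 2) * (\sum_(i in U) w i) / #|U|%:R).
  by field; rewrite gt_eqF.
by apply: ler_wpM2l; [exact: ltW | exact: expR_ge1Dx].
Qed.

Lemma exists_le_average (I : finType) (U : {set I}) (h : I -> R) (x : R) :
  U != set0 -> \sum_(i in U) h i <= #|U|%:R * x -> exists2 i, i \in U & h i <= x.
Proof.
move=> U0 hsum; apply/exists_inP; apply: contraLR hsum => /exists_inPn hgt.
have : \sum_(i in U) x < \sum_(i in U) h i.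
  apply: ltr_sum => [|i iU]; last by rewrite ltNge hgt.
  by case/set0Pn: U0 => i iU; apply/hasP; exists i; rewrite ?mem_index_enum.
by rewrite sumr_const -ltNge mulr_natl.
Qed.

Lemma le_ln_card_of_sum_expR_le (K : finType) (Kt : {set K}) (x y : K -> R) (Y : R) :
  (forall c, c \in Kt -> y c <= Y) ->
  \sum_(c in Kt) expR (x c) <= \sum_(c in Kt) expR (y c) ->
  forall c, c \in Kt -> x c <= ln #|Kt|%:R + Y.
Proof.
move=> yY hsum c cK.
have card_gt0 : 0 < #|Kt|%:R :> R by rewrite ltr0n card_gt0; apply/set0Pn; exists c.
rewrite -ler_expR expRD lnK ?posrE //.
apply: le_trans (le_trans hsum _).
  by rewrite (bigD1 c) //= lerDl sumr_ge0 // => ? _; exact: expR_ge0.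
apply: (@le_trans _ _ (\sum_(c' in Kt) expR Y)).
  by apply: ler_sum => c' /yY; rewrite ler_expR.
by rewrite sumr_const mulr_natl.
Qed.

(* [lam = sqrt (3 y / x)] balances the two error terms; when [y = 0] let [lam] tend to [0]. *)
Lemma le_of_forall_lambda_tradeoff (x y z : R) : 0 < x -> 0 <= y ->
  (forall lam, 0 < lam -> x * (1 - 2 / 3 * lam) - y / lam <= z) ->
  (1 - Num.sqrt (3 * y / x)) * x <= z.
Proof.
move=> x_gt0 y0 hz; set d := Num.sqrt _.
have y_eq : y = d ^+ 2 * x / 3.
  by rewrite /d sqr_sqrtr ?divr_ge0 ?mulr_ge0 ?(ltW x_gt0) //; field; rewrite gt_eqF.
move: hz; rewrite {}y_eq.
have := sqrtr_ge0 (3 * y / x); rewrite -/d le0r => /orP [/eqP ->|d_gt0] hz; last first.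
  have := hz d d_gt0.
  by have -> : x * (1 - 2 / 3 * d) - d ^+ 2 * x / 3 / d = (1 - d) * x by field; rewrite gt_eqF.
apply/ler_addgt0Pr => e e_gt0; rewrite subr0 mul1r.
have lam_gt0 : 0 < 3 * e / (2 * (x + 1)) by rewrite divr_gt0 ?mulr_gt0 //; lra.
have := hz _ lam_gt0; rewrite expr0n /= !mul0r subr0.
have : x * (2 / 3 * (3 * e / (2 * (x + 1)))) <= e.
  rewrite (_ : x * _ = e * (x / (x + 1))); last by field; lra.
  apply: ler_piMr; first exact: ltW.
  by rewrite ler_pdivrMr ?mul1r; lra.
lra.
Qed.

End RealFacts.

Section Sampling.
Variable R : realType.

Lemma greedy_descent (I : finType) (Om : {set I}) (P : nat -> {set I} -> R) (n : nat) :
  (forall t (S : {set I}), S \subset Om -> #|S| = t -> (t < n)%N ->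
     exists2 v, v \in Om :\: S & P t.+1 (v |: S) <= P t S) ->
  exists2 S : {set I}, S \subset Om /\ #|S| = n & P n S <= P 0%N set0.
Proof.
move=> step; suff : forall t, (t <= n)%N ->
    exists2 S : {set I}, S \subset Om /\ #|S| = t & P t S <= P 0%N set0 by apply.
elim=> [|t IH] tn; first by exists set0; rewrite ?sub0set ?cards0.
have [S [SOm cardS] PS] := IH (ltnW tn).
have [v /setDP [vOm vS] Pv] := step t S SOm cardS tn.
exists (v |: S); last exact: le_trans Pv PS.
by rewrite subUset sub1set vOm SOm cardsU1 vS cardS.
Qed.

(* Conditional expectation of the weight of a uniform [n]-subset of a set of [N] elements of
   total weight [W], given that its first [t] elements carry weight [s]. *)
Definition cond_mean (N n W : R) (t : nat) (s : R) : R :=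
  s + (n - t%:R) * (W - s) / (N - t%:R).

(* Budget for the quadratic error terms of the remaining [n - t] draws. *)
Definition var_budget (lam N n W : R) (t : nat) : R :=
  2 / 3 * lam ^+ 2 * W * (n - t%:R) / (N - t%:R).

Lemma cond_mean_final (N W s : R) (n : nat) : cond_mean N n%:R W n s = s.
Proof. by rewrite /cond_mean subrr mul0r mul0r addr0. Qed.

Lemma cond_mean_init (N n W : R) : cond_mean N n W 0 0 = n * W / N.
Proof. by rewrite /cond_mean !subr0 add0r. Qed.

Lemma var_budget_final (lam N W : R) (n : nat) : var_budget lam N n%:R W n = 0.
Proof. by rewrite /var_budget subrr mulr0 mul0r. Qed.

Lemma var_budget_init (lam N n W : R) :
  var_budget lam N n W 0 = 2 / 3 * lam ^+ 2 * (n * W / N).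
Proof. by rewrite /var_budget !subr0; ring. Qed.

Lemma cond_mean_step (N n W s a : R) (t : nat) :
  N - t%:R - 1 != 0 -> N - t%:R != 0 ->
  cond_mean N n W t.+1 (s + a) =
  cond_mean N n W t s + (N - n) / (N - t%:R - 1) * (a - (W - s) / (N - t%:R)).
Proof.
move=> N1 N0; rewrite /cond_mean -natr1.
have N1' : N - (t%:R + 1) != 0 by rewrite opprD addrA.
by field; rewrite N1 N0.
Qed.

Lemma var_budget_step (lam N n W A : R) (t : nat) :
  0 <= A <= W -> t%:R + 1 <= n -> n < N ->
  var_budget lam N n W t.+1 +
    2 / 3 * lam ^+ 2 * ((N - n) / (N - t%:R - 1)) ^+ 2 * (A / (N - t%:R))
  <= var_budget lam N n W t.
Proof.
move=> /andP [A0 AW] tn nN.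
set d1 := N - t%:R; set d2 := N - t%:R - 1; set r := (N - n) / d2.
have d1_gt0 : 0 < d1 by rewrite /d1; lra.
have d2_gt0 : 0 < d2 by rewrite /d2; lra.
have r0 : 0 <= r by rewrite divr_ge0 ?(ltW d2_gt0) // subr_ge0 ltW.
have r1 : r <= 1 by rewrite ler_pdivrMr // mul1r /d2; lra.
have -> : var_budget lam N n W t = var_budget lam N n W t.+1 + 2 / 3 * lam ^+ 2 * (r * W / d1).
  rewrite /var_budget -natr1 /r /d1 /d2.
  have N1 : N - (t%:R + 1) != 0 by rewrite opprD addrA gt_eqF.
  by field; rewrite !gt_eqF.
have c0 : 0 <= 2 / 3 * lam ^+ 2 by rewrite mulr_ge0 ?sqr_ge0 ?divr_ge0.
rewrite lerD2l -mulrA ler_wpM2l // mulrA ler_pM2r ?invr_gt0 //.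
rewrite expr2 -mulrA ler_wpM2l //.
by apply: le_trans AW; rewrite ler_piMl.
Qed.

(* Method of conditional expectations: [expR (m - lam * cond_mean + var_budget)] is a pessimistic
   estimator, whose average over a uniformly drawn next element does not exceed its current value. *)
Lemma estimator_step (I : finType) (U : {set I}) (w : I -> R) (lam N n W s m : R) (t : nat) :
  (forall i, 0 <= w i <= 1) -> 0 < lam -> #|U|%:R = N - t%:R ->
  t%:R + 1 <= n -> n < N -> 0 <= s -> W = s + \sum_(i in U) w i ->
  \sum_(i in U) expR (m - lam * cond_mean N n W t.+1 (s + w i) + var_budget lam N n W t.+1)
  <= #|U|%:R * expR (m - lam * cond_mean N n W t s + var_budget lam N n W t).
Proof.
move=> w01 lam0 cardU tn nN s0 hW.
set A := \sum_(i in U) w i; set d1 := N - t%:R; set r := (N - n) / (N - t%:R - 1).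
have A0 : 0 <= A by apply: sumr_ge0 => i _; case/andP: (w01 i).
have d1_gt0 : 0 < d1 by rewrite /d1; lra.
have U0 : U != set0 by rewrite -card_gt0 -(ltr_nat R) cardU.
have r0 : 0 <= lam * r by rewrite mulr_ge0 // /r ?divr_ge0; lra.
set E := m - lam * cond_mean N n W t s + lam * r * (A / d1) + var_budget lam N n W t.+1.
have split_exp i : expR (m - lam * cond_mean N n W t.+1 (s + w i) + var_budget lam N n W t.+1)
    = expR E * expR (- (lam * r * w i)).
  rewrite cond_mean_step ?gt_eqF //; last by lra.
  have -> : W - s = A by rewrite hW addrC addKr.
  by rewrite -expRD /E -/r -/d1; congr expR; ring.
rewrite (eq_bigr _ (fun i _ => split_exp i)) -mulr_sumr.
apply: le_trans (ler_wpM2l (expR_ge0 _) (sum_expRN_le U0 r0 w01)) _.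
rewrite mulrCA cardU ler_wpM2l ?(ltW d1_gt0) // -expRD ler_expR -/A -/d1.
have AW : 0 <= A <= W by rewrite A0 hW lerDr.
have := var_budget_step lam AW tn nN.
rewrite -/d1 -/r /E.
have -> : (- (lam * r) + 2 / 3 * (lam * r) ^+ 2) * A / d1 =
  - (lam * r * (A / d1)) + 2 / 3 * lam ^+ 2 * r ^+ 2 * (A / d1) by ring.
lra.
Qed.

Definition sample_mean (I : finType) (Om : {set I}) (n : nat) (w : I -> R) : R :=
  n%:R * (\sum_(i in Om) w i) / #|Om|%:R.

Lemma exists_sample_expR_le (I K : finType) (Om : {set I}) (Kt : {set K})
    (w : K -> I -> R) (n : nat) (lam : R) :
  (forall c i, c \in Kt -> 0 <= w c i <= 1) -> 0 < lam -> (n < #|Om|)%N ->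
  exists2 S : {set I}, S \subset Om /\ #|S| = n &
    \sum_(c in Kt) expR (lam * sample_mean Om n (w c) - lam * \sum_(i in S) w c i)
    <= \sum_(c in Kt) expR (2 / 3 * lam ^+ 2 * sample_mean Om n (w c)).
Proof.
move=> w01 lam0 nOm.
pose N : R := #|Om|%:R; pose W c := \sum_(i in Om) w c i.
pose P t (S : {set I}) := \sum_(c in Kt) expR (lam * sample_mean Om n (w c)
  - lam * cond_mean N n%:R (W c) t (\sum_(i in S) w c i) + var_budget lam N n%:R (W c) t).
have [S SOm_n PS] : exists2 S : {set I}, S \subset Om /\ #|S| = n & P n S <= P 0%N set0.
  apply: greedy_descent => t S SOm cardS tn.
  have tOm : (t < #|Om|)%N := ltn_trans tn nOm.
  have cardU : #|Om :\: S|%:R = N - t%:R.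
    by rewrite cardsDS // natrB ?subset_leq_card // cardS.
  apply: exists_le_average.
    by rewrite -card_gt0 cardsDS // subn_gt0 cardS.
  rewrite exchange_big mulr_sumr; apply: ler_sum => c cK.
  under eq_bigr => v /setDP [_ vS] do rewrite big_setU1 //= addrC.
  apply: estimator_step => //; first by move=> i; exact: w01.
  - by rewrite natr1 ler_nat.
  - by rewrite ltr_nat.
  - by apply: sumr_ge0 => i _; case/andP: (w01 c i cK).
  - by rewrite /W (big_setID S) /= (setIidPr SOm).
exists S => //; apply: le_trans (le_trans PS _); rewrite /P.
  by under [X in _ <= X]eq_bigr => c _ do rewrite cond_mean_final var_budget_final addr0.
under eq_bigr => c _ do rewrite big_set0 cond_mean_init var_budget_init /W /N -/(sample_mean _ _ _).
by under eq_bigr => c _ do rewrite subrr add0r.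
Qed.

Lemma exists_sample_concentrated (I K : finType) (Om : {set I}) (Kt : {set K})
    (w : K -> I -> R) (n : nat) (lam M : R) :
  (forall c i, c \in Kt -> 0 <= w c i <= 1) -> 0 < lam -> (n < #|Om|)%N ->
  (forall c, c \in Kt -> sample_mean Om n (w c) <= M) ->
  exists2 S : {set I}, S \subset Om /\ #|S| = n &
    forall c, c \in Kt ->
      sample_mean Om n (w c) - ln #|Kt|%:R / lam - 2 / 3 * lam * M <= \sum_(i in S) w c i.
Proof.
move=> w01 lam0 nOm meanM.
have [S SOm_n hexp] := exists_sample_expR_le w01 lam0 nOm.
exists S => // c cK.
have lamM : forall c, c \in Kt ->
    2 / 3 * lam ^+ 2 * sample_mean Om n (w c) <= 2 / 3 * lam ^+ 2 * M.
  by move=> c' cK'; rewrite ler_wpM2l ?meanM // mulr_ge0 ?sqr_ge0 ?divr_ge0.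
have := le_ln_card_of_sum_expR_le lamM hexp cK.
set mu := sample_mean _ _ _; set s := \sum_(i in S) _; set L := ln _ => hL.
have : (mu - s - 2 / 3 * lam * M) * lam <= L.
  have -> : (mu - s - 2 / 3 * lam * M) * lam = lam * mu - lam * s - 2 / 3 * lam ^+ 2 * M by ring.
  lra.
rewrite -ler_pdivlMr //; lra.
Qed.

End Sampling.

Section SetFunctions.
Variables (R : realType) (V : finType).

Lemma submodular_marginal_le (g : {set V} -> R) (A B : {set V}) (x : V) :
  submodular_set_fun g -> A \subset B -> x \notin B ->
  g (x |: B) - g B <= g (x |: A) - g A.
Proof.
move=> g_sub AB xB.
have xAB : (x |: A) :|: B = x |: B by rewrite -setUA (setUidPr AB).
have xAB' : (x |: A) :&: B = A.
  rewrite setIUl (setIidPl AB) (_ : [set x] :&: B = set0) ?set0U //.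
  by apply/setP => y; rewrite !inE; case: eqP => // ->; exact/negbTE.
have := g_sub (x |: A) B; rewrite xAB xAB'; lra.
Qed.

(* [a v] is the marginal gain of [v] when the elements of [S] are added one at a time. *)
Lemma submodular_chain_weights (g : {set V} -> R) (S : {set V}) :
  monotone_set_fun g -> submodular_set_fun g ->
  exists a : V -> R, [/\ forall v, 0 <= a v <= g [set v] - g set0,
    g S = g set0 + \sum_(v in S) a v &
    forall A : {set V}, A \subset S -> g set0 + \sum_(v in A) a v <= g A].
Proof.
move=> g_mono g_sub; have gain_ge0 v : 0 <= g [set v] - g set0.
  by rewrite subr_ge0 g_mono ?sub0set.
move: {2}#|S| (erefl #|S|) => n; elim: n S => [|n IH] S cardS.
  have -> : S = set0 by apply/eqP; rewrite -cards_eq0 cardS.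
  exists (fun=> 0); split=> [v||A]; first by rewrite lexx gain_ge0.
    by rewrite big_set0 addr0.
  by rewrite subset0 => /eqP ->; rewrite big_set0 addr0.
have [x xS] : exists x, x \in S by apply/set0Pn; rewrite -card_gt0 cardS.
set S' := S :\ x; have xS' : x \notin S' by rewrite !inE eqxx.
have [|a [a_b a_tot a_sub]] := IH S'; first by move: cardS; rewrite (cardsD1 x) xS => -[].
have S_eq : S = x |: S' by rewrite setD1K.
have gain_x : g (x |: S') - g S' <= g [set x] - g set0.
  by have := submodular_marginal_le g_sub (sub0set S') xS'; rewrite setU0.
exists (fun v => if v == x then g S - g S' else a v); split.
- move=> v; case: eqP => [->|_]; last exact: a_b.
  have -> : g S = g (x |: S') by rewrite -S_eq.
  by rewrite gain_x andbT subr_ge0 g_mono // subsetUr.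
- rewrite (big_setD1 x xS) eqxx /= (eq_bigr a) -?a_tot; first lra.
  by move=> v /setD1P [/negbTE ->].
move=> A AS; case: (boolP (x \in A)) => xA.
  have A'S' : A :\ x \subset S' by rewrite setSD.
  rewrite (big_setD1 x xA) eqxx /= (eq_bigr a); last by move=> v /setD1P [/negbTE ->].
  have := a_sub _ A'S'; have := submodular_marginal_le g_sub A'S' xS'.
  by rewrite -S_eq setD1K //; lra.
have AS' : A \subset S' by rewrite subsetD1 AS.
rewrite (eq_bigr a); first exact: a_sub.
by move=> v vA; case: eqP => // vx; move: xA; rewrite -vx vA.
Qed.

Lemma monotone_setU (g : {set V} -> R) (T : {set V}) :
  monotone_set_fun g -> monotone_set_fun (fun A => g (A :|: T)).
Proof. by move=> g_mono A B AB; apply: g_mono; rewrite setSU. Qed.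

Lemma submodular_setU (g : {set V} -> R) (T : {set V}) :
  submodular_set_fun g -> submodular_set_fun (fun A => g (A :|: T)).
Proof.
move=> g_sub A B; have := g_sub (A :|: T) (B :|: T).
by rewrite setUACA setUid -setUIl.
Qed.

End SetFunctions.

Section Extrema.
Variable R : realType.

Lemma min_over_le (K : finType) (Kt : {set K}) (h : K -> R) (c : K) :
  c \in Kt -> min_over Kt h <= h c.
Proof.
move=> cK; rewrite /min_over; case: pickP => [c0 _|/(_ c)]; last by rewrite cK.
exact: bigmin_le_cond.
Qed.

Lemma le_min_over (K : finType) (Kt : {set K}) (h : K -> R) (y : R) :
  Kt != set0 -> (forall c, c \in Kt -> y <= h c) -> y <= min_over Kt h.
Proof.
case/set0Pn => c cK hy; rewrite /min_over; case: pickP => [c0 c0K|/(_ c)]; last by rewrite cK.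
by apply: le_bigmin; exact: hy.
Qed.

Lemma le_max_card_le (V : finType) (b : nat) (g : {set V} -> R) (S : {set V}) :
  (#|S| <= b)%N -> g S <= max_card_le b g.
Proof. exact: le_bigmax_cond. Qed.

Lemma max_card_le_attained (V : finType) (b : nat) (g : {set V} -> R) :
  exists2 S : {set V}, (#|S| <= b)%N & max_card_le b g = g S.
Proof.
apply: (big_ind (fun x => exists2 S : {set V}, (#|S| <= b)%N & x = g S)).
- by exists set0; rewrite ?cards0.
- move=> _ _ [S1 S1b ->] [S2 S2b ->].
  by have [_|_] := leP (g S1) (g S2); [exists S2 | exists S1].
- by move=> S Sb; exists S.
Qed.

End Extrema.

Section Capping.
Variable R : realType.

(* When the total vanishes, so does the factor, since [x / 0 = 0]. *)
Definition cap_weights (I : finType) (Om : {set I}) (K : R) (w : I -> R) (i : I) : R :=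
  w i * (Num.min (\sum_(j in Om) w j) K / \sum_(j in Om) w j).

Lemma cap_factor_bounds (x K : R) : 0 <= x -> 0 <= K -> 0 <= Num.min x K / x <= 1.
Proof.
have [->|x_ne0] := eqVneq x 0; first by rewrite invr0 mulr0 lexx ler01.
move=> x0 K0; have x_gt0 : 0 < x by rewrite lt0r x_ne0.
apply/andP; split; first by rewrite divr_ge0 // le_min x0.
by rewrite ler_pdivrMr // mul1r ge_min lexx.
Qed.

Lemma mul_cap_factor (x K : R) : 0 <= x -> 0 <= K -> x * (Num.min x K / x) = Num.min x K.
Proof.
have [->|x_ne0] := eqVneq x 0; first by rewrite mul0r => _ K0; rewrite min_l.
by rewrite mulrC divfK.
Qed.

Variables (I : finType) (Om : {set I}) (K : R) (w : I -> R).
Hypotheses (w_ge0 : forall i, 0 <= w i) (K_ge0 : 0 <= K).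

Lemma cap_weights_bounds i : 0 <= cap_weights Om K w i <= w i.
Proof.
have /andP [f0 f1] : 0 <= Num.min (\sum_(j in Om) w j) K / \sum_(j in Om) w j <= 1.
  by apply: cap_factor_bounds => //; exact: sumr_ge0.
by rewrite mulr_ge0 //= ler_piMr.
Qed.

Lemma sum_cap_weights :
  \sum_(i in Om) cap_weights Om K w i = Num.min (\sum_(i in Om) w i) K.
Proof. by rewrite -mulr_suml mul_cap_factor ?sumr_ge0. Qed.

End Capping.

Section RobustOptimum.
Variables (R : realType) (V C : finType) (g : C -> {set V} -> R) (Ct : {set C}).
Hypotheses (g_ge0 : forall c A, 0 <= g c A) (g_mono : forall c, monotone_set_fun (g c))
  (g_sub : forall c, submodular_set_fun (g c)) (Ct0 : Ct != set0).

Definition robust_value (S : {set V}) : R := min_over Ct (fun c => g c S).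

Local Notation opt b := (max_card_le b robust_value).

Lemma opt_ge0 (b : nat) : 0 <= opt b.
Proof.
apply: le_trans (le_max_card_le _ (_ : (#|set0| <= b)%N)); last by rewrite cards0.
exact: le_min_over.
Qed.

(* The weights are the marginal gains along [S0], divided by [u], then capped. *)
Lemma capped_modular_minorant (S0 : {set V}) (u K : R) :
  0 < u -> 0 <= K -> (forall v c, c \in Ct -> g c [set v] - g c set0 <= u) ->
  exists w : C -> V -> R, [/\ forall c v, c \in Ct -> 0 <= w c v <= 1,
    forall c, \sum_(v in S0) w c v = Num.min ((g c S0 - g c set0) / u) K
    & forall c (S : {set V}), S \subset S0 -> g c set0 + u * \sum_(v in S) w c v <= g c S].
Proof.
move=> u_gt0 K_ge0 gain_le.
have [a a_spec] := choice (fun c => submodular_chain_weights S0 (g_mono c) (g_sub c)).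
have a_ge0 c v : 0 <= a c v / u.
  by have [/(_ v) /andP [a0 _] _ _] := a_spec c; rewrite divr_ge0 ?(ltW u_gt0).
have w_le c v := cap_weights_bounds S0 (a_ge0 c) K_ge0 v.
exists (fun c => cap_weights S0 K (fun v => a c v / u)); split.
- move=> c v cC; have /andP [w0 wa] := w_le c v; rewrite w0 (le_trans wa) //.
  have [/(_ v) /andP [_ a_le] _ _] := a_spec c.
  by rewrite ler_pdivrMr // mul1r (le_trans a_le (gain_le v c cC)).
- move=> c; have [_ a_tot _] := a_spec c.
  by rewrite sum_cap_weights // a_tot addrC addKr mulr_suml.
move=> c S SS0; have [_ _ a_sub] := a_spec c.
apply: le_trans (a_sub S SS0); rewrite lerD2l mulr_sumr; apply: ler_sum => v _.
have /andP [_ wa] := w_le c v.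
by apply: le_trans (ler_wpM2l (ltW u_gt0) wa) _; rewrite mulrC divfK ?gt_eqF.
Qed.

Lemma opt_sample_bound_from_witness (S0 : {set V}) (B n : nat) (gamma lam O : R) :
  (0 < n)%N -> (n < #|S0|)%N -> (#|S0| <= B)%N -> 0 < gamma -> 0 < lam -> 0 < O ->
  (forall c, c \in Ct -> O <= g c S0) ->
  (forall v c, c \in Ct -> g c [set v] - g c set0 <= gamma * O) ->
  n%:R / B%:R * O * (1 - 2 / 3 * lam) - gamma * O * ln #|Ct|%:R / lam <= opt n.
Proof.
move=> n_gt0 nS0 S0B gamma_gt0 lam_gt0 O_gt0 O_le gain_le.
set L := ln _; set beta := n%:R / B%:R; pose u := gamma * O; pose N : R := #|S0|%:R.
pose M := n%:R / (B%:R * gamma); pose K := N / (B%:R * gamma).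
have u_gt0 : 0 < u by rewrite mulr_gt0.
have N_gt0 : 0 < N by rewrite ltr0n (leq_ltn_trans _ nS0).
have B_gt0 : 0 < B%:R :> R by rewrite ltr0n (leq_ltn_trans _ (leq_trans nS0 S0B)).
have [w [w01 w_sum w_sub]] := @capped_modular_minorant S0 u K u_gt0
  (divr_ge0 (ltW N_gt0) (mulr_ge0 (ltW B_gt0) (ltW gamma_gt0))) gain_le.
have mean_le c : c \in Ct -> sample_mean S0 n (w c) <= M.
  move=> _; rewrite /sample_mean w_sum (_ : M = n%:R * K / N).
    by rewrite ler_pM2r ?invr_gt0 // ler_wpM2l // ge_min lexx orbT.
  by rewrite /M /K; field; rewrite !gt_eqF.
(* Either the cap is active and the mean is [M], or [beta <= n / N] and [O <= g c S0] do it. *)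
have mean_ge c : c \in Ct -> u * M <= g c set0 + u * sample_mean S0 n (w c).
  move=> cC; rewrite /sample_mean w_sum -/N; set G := (g c S0 - g c set0) / u.
  have g0 := g_ge0 c set0.
  have [GK|KG] := leP G K; last first.
    by rewrite (_ : n%:R * K / N = M) ?lerDr // /M /K; field; rewrite !gt_eqF.
  have tot : O <= g c set0 + u * G by rewrite /G mulrC divfK ?gt_eqF // addrC subrK O_le.
  have G0 : 0 <= G by rewrite divr_ge0 ?subr_ge0 ?g_mono ?sub0set ?(ltW u_gt0).
  have beta0 : 0 <= beta by rewrite divr_ge0.
  have beta_le : beta <= n%:R / N.
    by rewrite /beta ler_pM2l ?ltr0n // lef_pV2 ?posrE // ler_nat.
  have h1 := ler_wpM2l beta0 tot.
  have h2 := ler_wpM2r (mulr_ge0 (ltW u_gt0) G0) beta_le.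
  have h3 : beta * g c set0 <= g c set0.
    by apply: ler_piMl; rewrite // ler_pdivrMr // mul1r ler_nat (leq_trans (ltnW nS0)).
  have -> : u * M = beta * O by rewrite /u /M /beta; field; rewrite !gt_eqF.
  have -> : u * (n%:R * G / N) = n%:R / N * (u * G) by ring.
  lra.
have [S [SS0 cardS] conc] := exists_sample_concentrated w01 lam_gt0 nS0 mean_le.
apply: le_trans (le_max_card_le _ (_ : (#|S| <= n)%N)); last by rewrite cardS.
apply: le_min_over => // c cC.
have := ler_wpM2l (ltW u_gt0) (conc c cC); have := mean_ge c cC; have := w_sub c S SS0.
have -> : beta * O * (1 - 2 / 3 * lam) - gamma * O * L / lam =
  u * M - u * (L / lam) - 2 / 3 * lam * (u * M) by rewrite /u /M /beta; field; rewrite !gt_eqF.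
rewrite -/L; lra.
Qed.

Lemma opt_sample_bound (B n : nat) (gamma lam : R) :
  (0 < n)%N -> (n <= B)%N -> 0 < gamma -> 0 < lam ->
  (forall v c, c \in Ct -> g c [set v] - g c set0 <= gamma * opt B) ->
  n%:R / B%:R * opt B * (1 - 2 / 3 * lam) - gamma * opt B * ln #|Ct|%:R / lam <= opt n.
Proof.
move=> n_gt0 nB gamma_gt0 lam_gt0 gain_le.
have [Sopt SoptB O_eq] := max_card_le_attained B robust_value.
have O_le c : c \in Ct -> opt B <= g c Sopt by rewrite O_eq; exact: min_over_le.
have := opt_ge0 B; rewrite le0r => /orP [/eqP ->|O_gt0].
  by rewrite !(mulr0, mul0r) subr0 opt_ge0.
have [small|large] := leqP #|Sopt| n; last first.
  exact: opt_sample_bound_from_witness n_gt0 large SoptB gamma_gt0 lam_gt0 O_gt0 O_le gain_le.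
apply: le_trans (le_max_card_le _ small); rewrite -O_eq.
have beta1 : n%:R / B%:R <= 1 :> R.
  by rewrite ler_pdivrMr ?mul1r ?ler_nat // ltr0n (leq_trans n_gt0 nB).
have : n%:R / B%:R * opt B * (1 - 2 / 3 * lam) <= n%:R / B%:R * opt B.
  by apply: ler_piMr; [rewrite mulr_ge0 ?divr_ge0 ?opt_ge0 | lra].
have : n%:R / B%:R * opt B <= opt B by apply: ler_piMl; rewrite ?opt_ge0.
have : 0 <= gamma * opt B * ln #|Ct|%:R / lam.
  by rewrite !mulr_ge0 ?invr_ge0 ?opt_ge0 ?(ltW gamma_gt0) ?(ltW lam_gt0) // ln_ge0 // ler1n card_gt0.
lra.
Qed.

Theorem robust_opt_budget_scaling (B n : nat) (gamma : R) :
  (0 < n)%N -> (n <= B)%N -> 0 < gamma ->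
  (forall v c, c \in Ct -> g c [set v] - g c set0 <= gamma * opt B) ->
  (1 - Num.sqrt (3 * gamma * (B%:R / n%:R) * ln #|Ct|%:R)) * (n%:R / B%:R) * opt B <= opt n.
Proof.
move=> n_gt0 nB gamma_gt0 gain_le.
have B_gt0 : 0 < B%:R :> R by rewrite ltr0n (leq_trans n_gt0 nB).
have := opt_ge0 B; rewrite le0r => /orP [/eqP ->|O_gt0]; first by rewrite mulr0 opt_ge0.
have -> : 3 * gamma * (B%:R / n%:R) * ln #|Ct|%:R =
    3 * (gamma * opt B * ln #|Ct|%:R) / (n%:R / B%:R * opt B).
  by field; rewrite !gt_eqF // ltr0n.
rewrite -mulrA; apply: le_of_forall_lambda_tradeoff => [||lam lam_gt0].
- by rewrite !mulr_gt0 ?invr_gt0 ?ltr0n // (leq_trans n_gt0 nB).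
- by rewrite !mulr_ge0 ?(ltW gamma_gt0) ?(ltW O_gt0) // ln_ge0 // ler1n card_gt0.
- exact: opt_sample_bound.
Qed.

End RobustOptimum.

Theorem lemma6 (R : realType) (V C : finType) (f : C -> {set V} -> R) (B : nat)
  (hV : (0 < #|V|)%N) (hC : (0 < #|C|)%N)
  (f_nonneg : forall c A, 0 <= f c A)
  (f_mono : forall c, monotone_set_fun (f c))
  (f_sub : forall c, submodular_set_fun (f c))
  (hB : (0 < B)%N)
  (T : {set V}) (Ct : {set C}) (hCt : Ct != set0)
  (gamma : R) (hgamma : 0 < gamma)
  (hsmall : forall v c, c \in Ct ->
     ftilde f T c [set v] - ftilde f T c set0 <= gamma * OPTt f T Ct B)
  (Bt : nat) (hBt0 : (0 < Bt)%N) (hBtB : (Bt <= B)%N) :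
  OPTt f T Ct Bt >=
    (1 - Num.sqrt (3 * gamma * (B%:R / Bt%:R) * ln (#|C|%:R : R)))
      * (Bt%:R / B%:R) * OPTt f T Ct B.
Proof.
have ft_ge0 c A : 0 <= ftilde f T c A := f_nonneg c _.
have ft_mono c : monotone_set_fun (ftilde f T c) by exact: monotone_setU.
have ft_sub c : submodular_set_fun (ftilde f T c) by exact: submodular_setU.
apply: le_trans (robust_opt_budget_scaling ft_ge0 ft_mono ft_sub hCt hBt0 hBtB hgamma hsmall).
apply: ler_wpM2r; first exact: opt_ge0.
apply: ler_wpM2r; first by rewrite divr_ge0.
rewrite lerD2l lerN2; apply/ler_wsqrtr/ler_wpM2l.
  by rewrite !mulr_ge0 ?invr_ge0 ?(ltW hgamma) ?ler0n.
by rewrite ler_ln ?posrE ?ltr0n ?card_gt0 // ler_nat max_card.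
Qed.
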